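(* Let $f,g\in\mathbb{H}$ be linearly independent pure unit quaternions, $h\in L^1(\mathbb{R}^2,\mathbb{H})$, $h_{\pm}=\frac12(h\pm fhg)$, and $$\mathcal{F}_D^{f,g}\{h\}(\boldsymbol{\omega})=\int_{\mathbb{R}^2}e^{-f\frac12(x_1\omega_1+x_2\omega_2)}\,h(\mathbf{x})\,e^{-g\frac12(x_1\omega_1-x_2\omega_2)}\,d^2\mathbf{x}.$$ Writing $\mathcal{F}^{f,g}_{D\pm}\{h\}=\mathcal{F}^{f,g}_{D}\{h_{\pm}\}$, one has $$\mathcal{F}^{f,g}_{D+}\{h\}=\int_{\mathbb{R}^2}h_+(\mathbf{x})e^{g x_2\omega_2}d^2\mathbf{x}=\int_{\mathbb{R}^2}e^{-f x_2\omega_2}h_+(\mathbf{x})d^2\mathbf{x},\quad \mathcal{F}^{f,g}_{D-}\{h\}=\int_{\mathbb{R}^2}h_-(\mathbf{x})e^{-g x_1\omega_1}d^2\mathbf{x}=\int_{\mathbb{R}^2}e^{-f x_1\omega_1}h_-(\mathbf{x})d^2\mathbf{x}.$$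
   Context: $\mathbb{H}$ is the real quaternion algebra; a pure unit quaternion $f$ satisfies $f^2=-1$, and $e^{\alpha f}=\cos\alpha+f\sin\alpha$. $d^2\mathbf{x}=dx_1dx_2$. *)

From mathcomp Require Import all_boot all_order all_algebra.
From mathcomp Require Import all_classical all_reals all_analysis.
Set Implicit Arguments. Unset Strict Implicit. Unset Printing Implicit Defensive.
Import Order.TTheory GRing.Theory Num.Theory.
Local Open Scope ring_scope.

(* Real quaternions a + b i + c j + d k *)
Record quat (R : realType) := Quat { q0 : R; q1 : R; q2 : R; q3 : R }.

Section Quat.
Variable R : realType.
Definition qadd (p q : quat R) : quat R :=
  Quat (q0 p + q0 q) (q1 p + q1 q) (q2 p + q2 q) (q3 p + q3 q).
Definition qscale (a : R) (q : quat R) : quat R :=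
  Quat (a * q0 q) (a * q1 q) (a * q2 q) (a * q3 q).
Definition qzero : quat R := Quat 0 0 0 0.
Definition qone : quat R := Quat 1 0 0 0.
Definition qmul (p q : quat R) : quat R :=
  Quat (q0 p * q0 q - q1 p * q1 q - q2 p * q2 q - q3 p * q3 q)
       (q0 p * q1 q + q1 p * q0 q + q2 p * q3 q - q3 p * q2 q)
       (q0 p * q2 q - q1 p * q3 q + q2 p * q0 q + q3 p * q1 q)
       (q0 p * q3 q + q1 p * q2 q - q2 p * q1 q + q3 p * q0 q).
(* pure unit quaternion: zero scalar part, norm 1 (equivalently f^2 = -1) *)
Definition pure_unit (f : quat R) : Prop :=
  q0 f = 0 /\ q1 f ^+ 2 + q2 f ^+ 2 + q3 f ^+ 2 = 1.
Definition lin_indep (f g : quat R) : Prop :=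
  forall a b : R, qadd (qscale a f) (qscale b g) = qzero -> a = 0 /\ b = 0.
Definition qexp (f : quat R) (alpha : R) : quat R :=
  qadd (qscale (cos alpha) qone) (qscale (sin alpha) f).

Definition leb2 := ((@lebesgue_measure R) \x (@lebesgue_measure R))%E.

(* h in L^1(R^2, H): every real component is Lebesgue integrable on R^2 *)
Definition qL1 (h : R * R -> quat R) : Prop :=
  [/\ leb2.-integrable setT (fun x => (q0 (h x))%:E),
      leb2.-integrable setT (fun x => (q1 (h x))%:E),
      leb2.-integrable setT (fun x => (q2 (h x))%:E) &
      leb2.-integrable setT (fun x => (q3 (h x))%:E)].

Definition qint (F : R * R -> quat R) : quat R :=
  Quat (Rintegral leb2 setT (fun x => q0 (F x)))
       (Rintegral leb2 setT (fun x => q1 (F x)))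
       (Rintegral leb2 setT (fun x => q2 (F x)))
       (Rintegral leb2 setT (fun x => q3 (F x))).

Definition hplus (f g : quat R) (h : R * R -> quat R) (x : R * R) : quat R :=
  qscale (1/2) (qadd (h x) (qmul (qmul f (h x)) g)).
Definition hminus (f g : quat R) (h : R * R -> quat R) (x : R * R) : quat R :=
  qscale (1/2) (qadd (h x) (qscale (-1) (qmul (qmul f (h x)) g))).

Definition FD (f g : quat R) (h : R * R -> quat R) (w : R * R) : quat R :=
  qint (fun x => qmul (qmul (qexp f (- ((x.1 * w.1 + x.2 * w.2) / 2))) (h x))
                      (qexp g (- ((x.1 * w.1 - x.2 * w.2) / 2)))).
End Quat.

(* With a = (x1 w1 + x2 w2)/2 and b = (x1 w1 - x2 w2)/2 the integrand of F_D is
   e^{-fa} h_± e^{-gb}.  Because f^2 = g^2 = -1, h_+ satisfies f h_+ = -h_+ g and h_-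
   satisfies f h_- = h_- g, so an exponential in f can be carried across h_± into an
   exponential in g (with the angle negated for h_+), and conversely.  The exponential
   law then merges the two factors into one of angle a - b = x2 w2 or a + b = x1 w1.
   The identities hold pointwise in x. *)
From mathcomp Require Import all_boot all_order all_algebra.
From mathcomp Require Import all_classical all_reals all_analysis.
From mathcomp Require Import ring.
Import Order.TTheory GRing.Theory Num.Theory.
Set Implicit Arguments. Unset Strict Implicit.
Local Open Scope ring_scope.

Ltac quat_ring := repeat match goal with q : quat _ |- _ => destruct q end;
  rewrite /qmul /qadd /qscale /qexp /qone /=; congr Quat; ring.

Section QuaternionAlgebra.
Variable R : realType.
Implicit Types (p q r f g : quat R) (s t : R).

Lemma qmulA p q r : qmul (qmul p q) r = qmul p (qmul q r).
Proof. quat_ring. Qed.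

Lemma qmulZl s p q : qmul (qscale s p) q = qscale s (qmul p q).
Proof. quat_ring. Qed.

Lemma qmulZr s p q : qmul p (qscale s q) = qscale s (qmul p q).
Proof. quat_ring. Qed.

Lemma qmulDl p q r : qmul (qadd p q) r = qadd (qmul p r) (qmul q r).
Proof. quat_ring. Qed.

Lemma qmulDr p q r : qmul p (qadd q r) = qadd (qmul p q) (qmul p r).
Proof. quat_ring. Qed.

Lemma pure_unit_mulKl f p : pure_unit f -> qmul f (qmul f p) = qscale (-1) p.
Proof.
case: f => a b c d [/= -> norm1]; rewrite -[-1]opprK -norm1.
by case: p => ????; rewrite /qmul /qscale /=; congr Quat; ring.
Qed.

Lemma pure_unit_mulKr g p : pure_unit g -> qmul (qmul p g) g = qscale (-1) p.
Proof.
case: g => a b c d [/= -> norm1]; rewrite -[-1]opprK -norm1.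
by case: p => ????; rewrite /qmul /qscale /=; congr Quat; ring.
Qed.

Lemma qexpD g s t : pure_unit g -> qmul (qexp g s) (qexp g t) = qexp g (s + t).
Proof.
case: g => a b c d [/= -> norm1].
have -> : qmul (qexp (Quat 0 b c d) s) (qexp (Quat 0 b c d) t) =
  qadd (qscale (cos s * cos t - sin s * sin t * (b ^+ 2 + c ^+ 2 + d ^+ 2)) (qone R))
       (qscale (cos s * sin t + sin s * cos t) (Quat 0 b c d)) by quat_ring.
by rewrite norm1 mulr1 /qexp cosD sinD; congr (qadd _ (qscale _ _)); ring.
Qed.

Lemma qexp_intertwine f g q s :
  qmul f q = qmul q g -> qmul (qexp f s) q = qmul q (qexp g s).
Proof.
move=> fq; have -> : qmul (qexp f s) q = qadd (qscale (cos s) q) (qscale (sin s) (qmul f q)).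
  by quat_ring.
by rewrite fq; quat_ring.
Qed.

Lemma qexp_anti_intertwine f g q s :
  qmul f q = qscale (-1) (qmul q g) -> qmul (qexp f s) q = qmul q (qexp g (- s)).
Proof.
move=> fq; have -> : qmul (qexp f s) q = qadd (qscale (cos s) q) (qscale (sin s) (qmul f q)).
  by quat_ring.
by rewrite fq /qexp cosN sinN; quat_ring.
Qed.

End QuaternionAlgebra.

Section SplitParts.
Variable R : realType.
Implicit Types (f g q : quat R) (a b : R).

Lemma hplus_anti_intertwine f g h x : pure_unit f -> pure_unit g ->
  qmul f (hplus f g h x) = qscale (-1) (qmul (hplus f g h x) g).
Proof.
move=> f_pure g_pure.
rewrite /hplus qmulZr qmulDr -qmulA pure_unit_mulKl // !qmulZl qmulDl pure_unit_mulKr //.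
by move: (qmul f (h x)) (qmul (h x) g) => fh hg; quat_ring.
Qed.

Lemma hminus_intertwine f g h x : pure_unit f -> pure_unit g ->
  qmul f (hminus f g h x) = qmul (hminus f g h x) g.
Proof.
move=> f_pure g_pure.
rewrite /hminus qmulZr qmulDr qmulZr -qmulA pure_unit_mulKl // !qmulZl qmulDl qmulZl.
rewrite pure_unit_mulKr //.
by move: (qmul f (h x)) (qmul (h x) g) => fh hg; quat_ring.
Qed.

Lemma kernel_anti_intertwined f g q a b : pure_unit f -> pure_unit g ->
  qmul f q = qscale (-1) (qmul q g) ->
  qmul (qmul (qexp f (- a)) q) (qexp g (- b)) = qmul q (qexp g (a - b)) /\
  qmul (qmul (qexp f (- a)) q) (qexp g (- b)) = qmul (qexp f (b - a)) q.
Proof.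
move=> f_pure g_pure fq; split.
- by rewrite (qexp_anti_intertwine _ fq) opprK qmulA qexpD.
- by rewrite qmulA -(qexp_anti_intertwine _ fq) -qmulA qexpD // addrC.
Qed.

Lemma kernel_intertwined f g q a b : pure_unit f -> pure_unit g ->
  qmul f q = qmul q g ->
  qmul (qmul (qexp f (- a)) q) (qexp g (- b)) = qmul q (qexp g (- (a + b))) /\
  qmul (qmul (qexp f (- a)) q) (qexp g (- b)) = qmul (qexp f (- (a + b))) q.
Proof.
move=> f_pure g_pure fq; split.
- by rewrite (qexp_intertwine _ fq) qmulA qexpD // opprD.
- by rewrite qmulA -(qexp_intertwine _ fq) -qmulA qexpD // opprD.
Qed.

End SplitParts.

Lemma eq_qint (R : realType) (F G : R * R -> quat R) :
  (forall x, F x = G x) -> qint F = qint G.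
Proof. by move=> FG; congr qint; apply: funext. Qed.

Theorem mainTheorem6 (R : realType) (f g : quat R) (h : R * R -> quat R) :
  pure_unit f -> pure_unit g -> lin_indep f g -> qL1 h ->
  forall w : R * R,
    [/\ FD f g (hplus f g h) w
          = qint (fun x => qmul (hplus f g h x) (qexp g (x.2 * w.2))),
        FD f g (hplus f g h) w
          = qint (fun x => qmul (qexp f (- (x.2 * w.2))) (hplus f g h x)),
        FD f g (hminus f g h) w
          = qint (fun x => qmul (hminus f g h x) (qexp g (- (x.1 * w.1)))) &
        FD f g (hminus f g h) w
          = qint (fun x => qmul (qexp f (- (x.1 * w.1))) (hminus f g h x))].
Proof.
move=> f_pure g_pure _ _ w.
split; apply: eq_qint => x;
  set a := (x.1 * w.1 + x.2 * w.2) / 2; set b := (x.1 * w.1 - x.2 * w.2) / 2;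
  have hp := hplus_anti_intertwine h x f_pure g_pure;
  have hm := hminus_intertwine h x f_pure g_pure.
- have [-> _] := kernel_anti_intertwined a b f_pure g_pure hp.
  by congr (qmul _ (qexp _ _)); rewrite /a /b; field.
- have [_ ->] := kernel_anti_intertwined a b f_pure g_pure hp.
  by congr (qmul (qexp _ _) _); rewrite /a /b; field.
- have [-> _] := kernel_intertwined a b f_pure g_pure hm.
  by congr (qmul _ (qexp _ _)); rewrite /a /b; field.
- have [_ ->] := kernel_intertwined a b f_pure g_pure hm.
  by congr (qmul (qexp _ _) _); rewrite /a /b; field.
Qed.
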